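(* Let $G$ be a hyperbolic group and $\partial_\infty G$ its boundary at infinity, equipped with any visual metric $d$. Then $(\partial_\infty G,d)$ admits a finite expanding cover: there are finitely many open sets $U_1,\dots,U_N$ covering $\partial_\infty G$, maps $f_i:U_i\to\partial_\infty G$ and constants $L_i>1$ such that $d(f_i(x),f_i(y))\ge L_i\,d(x,y)$ for all $x,y\in U_i$.
   Context: A finitely generated group $G$ is hyperbolic if its Cayley graph $\Gamma(G,S)$ for some finite symmetric generating set $S$ (with path metric) is $\delta$-hyperbolic for some $\delta\ge0$. $\partial_\infty G=\partial_\infty\Gamma(G,S)$ is the Gromov boundary (equivalence classes of geodesic rays from a base point, rays equivalent when at finite Hausdorff distance), with its natural topology; Gromov product $(x,y)_o=\frac12(d(x,o)+d(y,o)-d(x,y))$, extended to the boundary by $(x,y)_o=\sup\liminf_{i,j}(x_i,y_j)_o$ over sequences representing $x,y$. A metric $d$ on $\partial_\infty G$ is visual (with base point $o$ and parameter $a>1$) if it induces the natural topology and $C_1a^{-(x,y)_o}\le d(x,y)\le C_2a^{-(x,y)_o}$ for some $C_1,C_2>0$ and all distinct $x,y$. *)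

From HB Require Import structures.
From mathcomp Require Import all_boot all_order all_algebra.
From mathcomp Require Import all_classical all_reals all_analysis.
From Stdlib Require List.
Set Implicit Arguments. Unset Strict Implicit. Unset Printing Implicit Defensive.
Import Order.TTheory GRing.Theory Num.Theory.
Local Open Scope ring_scope.
Local Open Scope classical_set_scope.

Record group_on (G : Type) := GroupOn {
  gmul : G -> G -> G;
  ginv : G -> G;
  gone : G;
  gmulA : forall x y z, gmul x (gmul y z) = gmul (gmul x y) z;
  gmul1 : forall x, gmul gone x = x;
  gmulV : forall x, gmul (ginv x) x = gone }.

Section Hyperbolic.
Variables (R : realType) (G : Type) (gr : group_on G) (S : seq G).

Definition S_word (w : seq G) : Prop := forall s, List.In s w -> List.In s S.
Definition word_val (w : seq G) : G := foldr (gmul gr) (gone gr) w.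

Definition symmetric_gen_set : Prop :=
  (forall s, List.In s S -> List.In (ginv gr s) S) /\
  (forall g, exists w, S_word w /\ word_val w = g).

(* word metric = path metric of the Cayley graph Gamma(G,S) restricted to vertices *)
Definition wdist (g h : G) : R :=
  inf [set v | exists w, [/\ S_word w, word_val w = gmul gr (ginv gr g) h & v = (size w)%:R]].

Definition gprod (o x y : G) : R := (wdist x o + wdist y o - wdist x y) / 2.

(* delta-hyperbolicity (Gromov four-point condition) *)
Definition hyperbolic_Cayley : Prop :=
  exists delta : R, 0 <= delta /\
    forall o x y z, Num.min (gprod o x y) (gprod o y z) - delta <= gprod o x z.

Definition geod_ray (g : nat -> G) : Prop :=
  g 0%N = gone gr /\ forall i j : nat, (i <= j)%N -> wdist (g i) (g j) = (j - i)%:R.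

Definition ray_equiv (g h : nat -> G) : Prop :=
  exists K : R, (forall i, exists j, wdist (g i) (h j) <= K) /\
                (forall j, exists i, wdist (g i) (h j) <= K).

Definition bdry := {A : set (nat -> G) |
  exists g, geod_ray g /\ A = [set h | geod_ray h /\ ray_equiv g h]}.

(* a sequence x_i in G represents the boundary point xi (i.e. converges to it) *)
Definition represents (xi : bdry) (x : nat -> G) : Prop :=
  exists g, proj1_sig xi g /\
    forall M : R, exists N : nat, forall i j : nat, (N <= i)%N -> (N <= j)%N ->
      M <= gprod (gone gr) (x i) (g j).

Definition liminf2 (u : nat -> nat -> \bar R) : \bar R :=
  ereal_sup (range (fun N : nat =>
    ereal_inf [set v | exists i j : nat, [/\ (N <= i)%N, (N <= j)%N & v = u i j]])).

Definition gprod_bd (o : G) (xi eta : bdry) : \bar R :=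
  ereal_sup [set v | exists x y, [/\ represents xi x, represents eta y &
            v = liminf2 (fun i j => (gprod o (x i) (y j))%:E)]].

Definition bd_open (U : set bdry) : Prop :=
  forall xi, U xi -> exists r : R, forall eta, (r%:E < gprod_bd (gone gr) xi eta)%E -> U eta.

Definition is_metric (d : bdry -> bdry -> R) : Prop :=
  (forall x y, 0 <= d x y) /\ (forall x y, d x y = 0 <-> x = y) /\
  (forall x y, d x y = d y x) /\ (forall x y z, d x z <= d x y + d y z).

Definition metric_open (d : bdry -> bdry -> R) (U : set bdry) : Prop :=
  forall xi, U xi -> exists e : R, 0 < e /\ forall eta, d xi eta < e -> U eta.

Definition visual_metric (d : bdry -> bdry -> R) : Prop :=
  is_metric d /\ (forall U, bd_open U <-> metric_open d U) /\
  exists (o : G) (a C1 C2 : R), 1 < a /\ 0 < C1 /\ 0 < C2 /\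
    forall x y : bdry, x <> y -> exists p : R, gprod_bd o x y = p%:E /\
      C1 * a `^ (- p) <= d x y /\ d x y <= C2 * a `^ (- p).

End Hyperbolic.

(* Fix n large and call a boundary point near h if one of its rays passes within 10 delta
   of h at time n.  Visually close points have Gromov product above n + |o|, so their rays
   fellow travel up to time n; hence the metric interiors of the sets of points near h,
   for the finitely many |h| <= n, cover the boundary.  On the points near h, left
   translation by h^-1 acts on the boundary: the translated ray starts near 1, and König's
   lemma yields a geodesic ray from 1 shadowing it.  This translation lowers Gromov
   products based at o by n up to the constant c = 2|o| + 34 delta, so by the visual
   bounds it multiplies distances by at least (C1 / C2) a^(n - c) > 1 for n large. *)

From HB Require Import structures.
From mathcomp Require Import all_boot all_order all_algebra.
From mathcomp Require Import all_classical all_reals all_analysis.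
From mathcomp Require Import ring lra zify.
Set Implicit Arguments. Unset Strict Implicit. Unset Printing Implicit Defensive.
Import Order.TTheory GRing.Theory Num.Theory.
Local Open Scope ring_scope.
Local Open Scope classical_set_scope.

Section Liminf2.
Variable R : realType.
Local Open Scope ereal_scope.

Definition tail_inf (u : nat -> nat -> \bar R) (N : nat) : \bar R :=
  ereal_inf [set v | exists i j : nat, [/\ (N <= i)%N, (N <= j)%N & v = u i j]].

Lemma tail_inf_le_liminf2 u N : tail_inf u N <= liminf2 u.
Proof. by apply: ereal_sup_ubound; exists N. Qed.

Lemma le_liminf2 (u : nat -> nat -> R) (M : R) :
  (exists N, forall i j, (N <= i)%N -> (N <= j)%N -> (M <= u i j)%R) ->
  M%:E <= liminf2 (fun i j => (u i j)%:E).
Proof.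
case=> N HN; apply: le_trans (tail_inf_le_liminf2 _ N).
by apply: le_ereal_inf_tmp => _ [i [j [hi hj ->]]]; rewrite lee_fin HN.
Qed.

Lemma lt_liminf2 (u : nat -> nat -> R) (M : R) :
  M%:E < liminf2 (fun i j => (u i j)%:E) ->
  exists N, forall i j, (N <= i)%N -> (N <= j)%N -> (M < u i j)%R.
Proof.
move=> /ereal_sup_gt [_ [N _ <-] HM]; exists N => i j hi hj.
rewrite -lte_fin; apply: lt_le_trans HM _.
by apply: ereal_inf_lbound; exists i, j.
Qed.

Lemma liminf2_leD (u w : nat -> nat -> R) (c : R) :
  (exists N, forall i j, (N <= i)%N -> (N <= j)%N -> (u i j <= w i j + c)%R) ->
  liminf2 (fun i j => (u i j)%:E) <= liminf2 (fun i j => (w i j)%:E) + c%:E.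
Proof.
case=> N0 HN; apply: ge_ereal_sup => _ [N _ <-].
set N' := maxn N N0.
have le_tail : tail_inf (fun i j => (u i j)%:E) N <= tail_inf (fun i j => (u i j)%:E) N'.
  apply: ereal_inf_le_tmp => _ [i [j [hi hj ->]]].
  by exists i, j; split => //; lia.
apply: le_trans le_tail _; apply: le_trans (leeD2r _ (tail_inf_le_liminf2 _ N')).
rewrite -leeBlDr //; apply: le_ereal_inf_tmp => _ [i [j [hi hj ->]]].
rewrite leeBlDr //; apply: (@le_trans _ _ (u i j)%:E).
  by apply: ereal_inf_lbound; exists i, j.
by rewrite -EFinD lee_fin HN //; lia.
Qed.

End Liminf2.

Section Konig.
Variables (A : Type) (seqs : nat -> nat -> A) (box : nat -> list A) (start : nat -> nat).
Hypothesis seqs_in_box : forall t j, (start t <= j)%N -> List.In (seqs j t) (box t).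

Definition infinite_nat (J : set nat) := forall N, exists j, (N <= j)%N /\ J j.

Lemma infinite_nat_tail J N : infinite_nat J -> infinite_nat (J `&` [set j | (N <= j)%N]).
Proof.
by move=> HJ M; have [j [hj Jj]] := HJ (maxn M N); exists j; split; [|split => //=]; lia.
Qed.

Lemma infinite_pigeonhole (l : list A) (F : nat -> A) (J : set nat) : infinite_nat J ->
  (forall j, J j -> List.In (F j) l) -> exists c, infinite_nat (J `&` [set j | F j = c]).
Proof.
elim: l J => [|a l IH] J HJ Hin; first by have [j [_ /Hin []]] := HJ 0%N.
have [Ha|not_Ha] := pselect (infinite_nat (J `&` [set j | F j = a])); first by exists a.
have [N HN] : exists N, forall j, (N <= j)%N -> J j -> F j <> a.
  apply: contrapT => HH; apply: not_Ha => N.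
  apply: contrapT => HN; apply: HH; exists N => j hj Jj Fj; apply: HN.
  by exists j.
have [|c Hc] := IH _ (infinite_nat_tail N HJ).
  by move=> j [Jj hj]; case: (Hin j Jj) => // Fja; case: (HN j hj Jj).
by exists c => M; have [j [hj [[Jj _] Fj]]] := Hc M; exists j.
Qed.

Lemma infinite_nat_refine (J : set nat) t :
  exists c, infinite_nat J -> infinite_nat (J `&` [set j | seqs j t = c]).
Proof.
have [HJ|] := pselect (infinite_nat J); last by exists (seqs 0%N 0%N).
have [|c Hc] := @infinite_pigeonhole (box t) (fun j => seqs j t) _ (infinite_nat_tail (start t) HJ).
  by move=> j [_ hj]; apply: seqs_in_box.
by exists c => _ M; have [j [hj [[Jj _] Fj]]] := Hc M; exists j.
Qed.

Fixpoint nested_infinite (pick : set nat * nat -> A) t : set nat :=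
  if t is t'.+1 then
    nested_infinite pick t' `&` [set j | seqs j t' = pick (nested_infinite pick t', t')]
  else setT.

Lemma konig : exists r : nat -> A, forall T N, exists j,
  (N <= j)%N /\ forall t, (t <= T)%N -> seqs j t = r t.
Proof.
have [pick Hpick] := choice (fun x : set nat * nat => infinite_nat_refine x.1 x.2).
have Hinf T : infinite_nat (nested_infinite pick T).
  by elim: T => [|T IH] /=; [move=> N; exists N | exact: (Hpick (_, T))].
exists (fun t => pick (nested_infinite pick t, t)).
have Hmem T j : nested_infinite pick T.+1 j ->
    forall t, (t <= T)%N -> seqs j t = pick (nested_infinite pick t, t).
  elim: T j => [|T IH] j /= [Hj1 Hj2] t.
    by rewrite leqn0 => /eqP ->.
  by rewrite leq_eqVlt => /orP [/eqP -> //|ht]; apply: IH.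
move=> T N; have [j [hj Jj]] := Hinf T.+1 N.
by exists j; split => // t ht; apply: Hmem Jj t ht.
Qed.

End Konig.

Section GroupOn.
Variables (G : Type) (gr : group_on G).
Local Notation mul := (gmul gr).
Local Notation inv := (ginv gr).
Local Notation one := (gone gr).

Lemma gmulgV x : mul x (inv x) = one.
Proof.
rewrite -[LHS](gmul1 gr) -(gmulV gr (inv x)) -gmulA.
by rewrite (gmulA gr (inv x) x) (gmulV gr x) (gmul1 gr) (gmulV gr).
Qed.

Lemma gmulg1 x : mul x one = x.
Proof. by rewrite -(gmulV gr x) gmulA gmulgV gmul1. Qed.

Lemma ginv_unique a b : mul a b = one -> a = inv b.
Proof. by move=> ab1; rewrite -[a]gmulg1 -(gmulgV b) gmulA ab1 gmul1. Qed.

Lemma ginvMg x y : inv (mul x y) = mul (inv y) (inv x).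
Proof.
symmetry; apply: ginv_unique.
by rewrite -gmulA (gmulA gr (inv x) x y) gmulV gmul1 gmulV.
Qed.

Lemma ginvgK x : inv (inv x) = x.
Proof. by symmetry; apply: ginv_unique; apply: gmulgV. Qed.

Lemma ginvg1 : inv one = one.
Proof. by symmetry; apply: ginv_unique; rewrite gmul1. Qed.

Lemma gmulKVg h x : mul h (mul (inv h) x) = x.
Proof. by rewrite gmulA gmulgV gmul1. Qed.

Lemma gmulKg h x : mul (inv h) (mul h x) = x.
Proof. by rewrite gmulA gmulV gmul1. Qed.

End GroupOn.

Lemma exists_natr_ge (R : archiRealDomainType) (x : R) : exists n : nat, x <= n%:R.
Proof.
have [x0|/ltW] := lerP 0 x; last by exists 0%N.
by exists (Num.Def.archi_bound x); apply/ltW/archi_boundP.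
Qed.

Lemma List_In_nth (T : Type) (x0 : T) (l : list T) x : List.In x l ->
  exists i, (i < size l)%N /\ nth x0 l i = x.
Proof.
elim: l => [|y l IH] //= [->|/IH [i [hi <-]]]; first by exists 0%N.
by exists i.+1.
Qed.

Lemma exists_powR_gt1 (R : realType) (b c a : R) : 0 < b -> 1 < a ->
  exists n : nat, 1 < b * a `^ (n%:R - c).
Proof.
move=> b_gt0 a_gt1; have lna_gt0 : 0 < ln a by apply: ln_gt0.
have [n hn] := exists_natr_ge (c + b^-1 / ln a); exists n.
rewrite -ltr_pdivrMl // mulr1 /powR gt_eqF ?(lt_trans ltr01 a_gt1) //.
apply: lt_le_trans (expR_ge1Dx _).
have : b^-1 <= (n%:R - c) * ln a by rewrite -ler_pdivrMr //; lra.
lra.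
Qed.

Section WordMetric.
Variables (R : realType) (G : Type) (gr : group_on G) (S : seq G).
Hypothesis hS : symmetric_gen_set gr S.

Local Notation mul := (gmul gr).
Local Notation inv := (ginv gr).
Local Notation one := (gone gr).
Local Notation dist := (wdist R gr S).
Local Notation gp := (gprod R gr S).
Local Notation ray := (geod_ray R gr S).

Lemma word_val_cat w1 w2 : word_val gr (w1 ++ w2) = mul (word_val gr w1) (word_val gr w2).
Proof. by elim: w1 => [|s w IH] /=; [rewrite gmul1 | rewrite IH gmulA]. Qed.

Lemma S_word_cat w1 w2 : S_word S w1 -> S_word S w2 -> S_word S (w1 ++ w2).
Proof. by move=> H1 H2 s Hs; case: (List.in_app_or _ _ _ Hs) => [/H1|/H2]. Qed.

Lemma S_word_take t w : S_word S w -> S_word S (take t w).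
Proof.
by move=> Hw s Hs; apply: Hw; rewrite -(cat_take_drop t w); apply: List.in_or_app; left.
Qed.

Lemma S_word_drop t w : S_word S w -> S_word S (drop t w).
Proof.
by move=> Hw s Hs; apply: Hw; rewrite -(cat_take_drop t w); apply: List.in_or_app; right.
Qed.

Lemma S_word_inv w : S_word S w -> exists w',
  [/\ S_word S w', size w' = size w & word_val gr w' = inv (word_val gr w)].
Proof.
elim: w => [|s w IH] Hw /=.
  by exists [::]; split => //=; rewrite ginvg1.
have [|w' [H1 H2 H3]] := IH; first by move=> t Ht; apply: Hw; right.
exists (w' ++ [:: inv s]); split.
- by apply: S_word_cat => // t [<-|[]]; apply: hS.1; apply: Hw; left.
- by rewrite size_cat /= H2 addn1.
- by rewrite word_val_cat H3 /= gmulg1 ginvMg.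
Qed.

Lemma wdist_le_size w g h : S_word S w -> word_val gr w = mul (inv g) h ->
  dist g h <= (size w)%:R.
Proof.
move=> Sw wgh; apply: ge_inf; last by exists w.
by exists 0 => _ [w' [_ _ ->]].
Qed.

Lemma wdist_geodesic_word g h : exists w,
  [/\ S_word S w, word_val gr w = mul (inv g) h & dist g h = (size w)%:R].
Proof.
pose P n := exists w, [/\ S_word S w, word_val gr w = mul (inv g) h & size w = n].
have exP : exists n, `[< P n >].
  have [w [Sw wgh]] := hS.2 (mul (inv g) h).
  by exists (size w); apply/asboolP; exists w.
case: (ex_minnP exP) => n /asboolP [w [Sw wgh sw]] n_min.
exists w; split => //; apply/le_anti/andP; split; first exact: wdist_le_size.
apply: lb_le_inf; first by exists (size w)%:R, w.
move=> _ [w' [Sw' wgh' ->]]; rewrite ler_nat sw; apply: n_min.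
by apply/asboolP; exists w'.
Qed.

Lemma wdist_ge0 g h : 0 <= dist g h.
Proof. by have [w [_ _ ->]] := wdist_geodesic_word g h. Qed.

Lemma wdistC g h : dist g h = dist h g.
Proof.
suff le_sym a b : dist a b <= dist b a by apply/le_anti; rewrite !le_sym.
have [w [Sw wba ->]] := wdist_geodesic_word b a.
have [w' [Sw' <- w'V]] := S_word_inv Sw.
by apply: wdist_le_size => //; rewrite w'V wba ginvMg ginvgK.
Qed.

Lemma wdist_triangle x y z : dist x z <= dist x y + dist y z.
Proof.
have [w1 [S1 w1xy ->]] := wdist_geodesic_word x y.
have [w2 [S2 w2yz ->]] := wdist_geodesic_word y z.
rewrite -natrD -size_cat; apply: wdist_le_size; first exact: S_word_cat.
by rewrite word_val_cat w1xy w2yz -gmulA gmulKVg.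
Qed.

Lemma wdist_xx x : dist x x = 0.
Proof.
apply/le_anti; rewrite wdist_ge0 andbT.
by apply: (@wdist_le_size [::]) => [? []|]; rewrite gmulV.
Qed.

Lemma wdist_mull c x y : dist (mul c x) (mul c y) = dist x y.
Proof. by rewrite /wdist ginvMg -gmulA gmulKg. Qed.

Fixpoint words_upto (K : nat) : list (seq G) :=
  if K is K'.+1 then [::] :: List.flat_map (fun s => List.map (cons s) (words_upto K')) S
  else [:: [::]].

Lemma In_words_upto K w : S_word S w -> (size w <= K)%N -> List.In w (words_upto K).
Proof.
elim: K w => [|K IH] [|s w] //= Sw hs; try by left.
right; apply/List.in_flat_map; exists s; split; first by apply: Sw; left.
by apply: List.in_map; apply: IH => // t Ht; apply: Sw; right.
Qed.

Definition ball_list p K := List.map (fun w => mul p (word_val gr w)) (words_upto K).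

Lemma In_ball_list p y (K : nat) : dist p y <= K%:R -> List.In y (ball_list p K).
Proof.
have [w [Sw wpy ->]] := wdist_geodesic_word p y; rewrite ler_nat => hK.
have -> : y = mul p (word_val gr w) by rewrite wpy gmulKVg.
by apply: List.in_map; apply: In_words_upto.
Qed.

Lemma geodesic_segment y : exists (L : nat) (gam : nat -> G),
  [/\ dist one y = L%:R, gam 0%N = one, gam L = y &
  forall t t', (t <= t')%N -> (t' <= L)%N -> dist (gam t) (gam t') = (t' - t)%:R].
Proof.
have [w [Sw wy dy]] := wdist_geodesic_word one y.
rewrite ginvg1 gmul1 in wy.
pose gam t := word_val gr (take t w).
have gam_le t t' : (t <= t')%N -> (t' <= size w)%N -> dist (gam t) (gam t') <= (t' - t)%:R.
  move=> htt' ht'; pose mid := drop t (take t' w).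
  have E : take t w ++ mid = take t' w by rewrite -{1}(take_takel w htt') cat_take_drop.
  have <- : size mid = (t' - t)%N by rewrite size_drop size_takel.
  apply: wdist_le_size; first exact/S_word_drop/S_word_take.
  by rewrite /gam -E word_val_cat gmulKg.
have gam0 : gam 0%N = one by rewrite /gam take0.
have gamL : gam (size w) = y by rewrite /gam take_size.
exists (size w), gam; split => // t t' htt' ht'.
apply/le_anti/andP; split; first exact: gam_le.
have := gam_le 0%N t (leq0n t) (leq_trans htt' ht').
have := gam_le t' (size w) ht' (leqnn _).
have := wdist_triangle one (gam t) y; have := wdist_triangle (gam t) (gam t') y.
by rewrite gam0 gamL dy subn0 !natrB //; lra.
Qed.

Lemma gprodC o x y : gp o x y = gp o y x.
Proof. by rewrite /gprod (wdistC x y) (addrC (dist x o)). Qed.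

Lemma gprod_le_base p q a b : gp p a b <= gp q a b + dist p q.
Proof.
rewrite /gprod; have := wdist_triangle a q p; have := wdist_triangle b q p.
by rewrite (wdistC q p); lra.
Qed.

Lemma gprod_change_base h a b : gp h a b + gp one a h + gp one b h = gp one a b + dist h one.
Proof. by rewrite /gprod (wdistC b h) (wdistC a h); lra. Qed.

Lemma gprod_mull c o x y : gp (mul c o) (mul c x) (mul c y) = gp o x y.
Proof. by rewrite /gprod !wdist_mull. Qed.

Lemma gprod_ge_dist u v : dist u one - dist u v <= gp one u v.
Proof. by rewrite /gprod; have := wdist_triangle u v one; lra. Qed.

Lemma ray_norm g t : ray g -> dist (g t) one = t%:R.
Proof. by case=> g0 Hg; rewrite wdistC -g0 Hg // subn0. Qed.

Lemma gprod_ray g n t : ray g -> (n <= t)%N -> gp one (g t) (g n) = n%:R.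
Proof.
move=> Hg hnt; rewrite /gprod !ray_norm // wdistC; case: Hg => _ ->//.
by rewrite natrB //; lra.
Qed.

Lemma gprod_ray_ge g N i j : ray g -> (N <= i)%N -> (N <= j)%N -> N%:R <= gp one (g i) (g j).
Proof.
move=> Hg hi hj; case: (leqP i j) => hij.
  by rewrite gprodC gprod_ray // ler_nat.
by rewrite gprod_ray ?ler_nat // ltnW.
Qed.

Definition gprod_diverges (x u : nat -> G) := forall M : R, exists N, forall i j,
  (N <= i)%N -> (N <= j)%N -> M <= gp one (x i) (u j).

Lemma gprod_diverges_ray g : ray g -> gprod_diverges g g.
Proof.
move=> Hg M; have [N HN] := exists_natr_ge M.
by exists N => i j hi hj; apply: le_trans HN (gprod_ray_ge Hg hi hj).
Qed.

Lemma gprod_diverges_translate x p k h n : gprod_diverges x p ->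
  (forall t, mul h (p t) = k (n + t)%N) -> gprod_diverges (fun i => mul h (x i)) k.
Proof.
move=> Hx hpk M; have [N HN] := Hx (M + dist h one).
exists (N + n)%N => i j hi hj.
have -> : k j = mul h (p (j - n)%N) by rewrite hpk subnKC //; lia.
have := gprod_mull h one (x i) (p (j - n)%N); rewrite gmulg1 => E.
have := gprod_le_base h one (mul h (x i)) (mul h (p (j - n)%N)).
by have := HN i (j - n)%N ltac:(lia) ltac:(lia); lra.
Qed.

Definition ray_class (r : nat -> G) := [set q | ray q /\ ray_equiv R gr S r q].

Definition bdry_of_ray r (Hr : ray r) : bdry R gr S :=
  exist _ (ray_class r) (ex_intro _ r (conj Hr erefl)).

Lemma ray_equiv_refl g : ray_equiv R gr S g g.
Proof. by exists 0; split => i; exists i; rewrite wdist_xx. Qed.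

Lemma bdry_mem (z : bdry R gr S) k : proj1_sig z k ->
  exists g, [/\ ray g, ray k, ray_equiv R gr S g k & proj1_sig z = ray_class g].
Proof. by case: z => A [g [Hg zg]] /=; rewrite zg => -[Hk gk]; exists g. Qed.

Lemma bdry_has_ray (z : bdry R gr S) : exists g, ray g /\ proj1_sig z g.
Proof.
by have [g [Hg ->]] := proj2_sig z; exists g; split => //; split => //; apply: ray_equiv_refl.
Qed.

Lemma gprod_bd_xx o (z : bdry R gr S) (M : R) : (M%:E <= gprod_bd o z z)%E.
Proof.
have [g [Hg zg]] := bdry_has_ray z.
have z_g : represents z g by exists g; split => //; exact: gprod_diverges_ray.
apply: (@le_trans _ _ (liminf2 (fun i j => (gp o (g i) (g j))%:E))).
  apply: le_liminf2; have [N HN] := exists_natr_ge (M + dist one o).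
  exists N => i j hi hj; have := gprod_ray_ge Hg hi hj.
  by have := gprod_le_base one o (g i) (g j); lra.
by apply: ereal_sup_ubound; exists g, g.
Qed.

Section Visual.
Variables (d : bdry R gr S -> bdry R gr S -> R) (o : G) (a C1 C2 : R).
Hypothesis d_metric : is_metric d.
Hypotheses (a_gt1 : 1 < a) (C1_gt0 : 0 < C1) (C2_gt0 : 0 < C2).
Hypothesis d_visual : forall x y, x <> y -> exists p : R, gprod_bd o x y = p%:E /\
  C1 * a `^ (- p) <= d x y /\ d x y <= C2 * a `^ (- p).

Definition metric_interior (A : set (bdry R gr S)) :=
  [set z | exists e : R, 0 < e /\ forall z', d z z' < e -> A z'].

Lemma metric_open_interior A : metric_open d (metric_interior A).
Proof.
move=> z [e [e_gt0 zA]]; exists e; split => // z1 dz1.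
exists (e - d z z1); split; first by lra.
by move=> z2 dz2; apply: zA; have := d_metric.2.2.2 z z1 z2; lra.
Qed.

Lemma metric_interior_sub A : metric_interior A `<=` A.
Proof. by move=> z [e [e_gt0 zA]]; apply: zA; rewrite (d_metric.2.1 z z).2. Qed.

Lemma gprod_bd_gt_of_dist_lt x y (q : R) : d x y < C1 * a `^ (- q) ->
  (q%:E < gprod_bd o x y)%E.
Proof.
have [<- _|xy dxy] := pselect (x = y).
  by apply: lt_le_trans (gprod_bd_xx o x (q + 1)); rewrite lte_fin; lra.
have [p [-> [dp _]]] := d_visual xy; rewrite lte_fin.
have : a `^ (- p) < a `^ (- q) by rewrite -(ltr_pM2l C1_gt0); lra.
by apply: contraTlt => pq; rewrite -leNgt; apply: (ler_powR (ltW a_gt1)); rewrite lerN2.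
Qed.

Lemma gprod_bd_gt_sub_interior xi (q : R) (A : set (bdry R gr S)) :
  (forall z, (q%:E < gprod_bd o xi z)%E -> A z) -> metric_interior A xi.
Proof.
move=> xiA; exists (C1 * a `^ (- q)); split; last by move=> z /gprod_bd_gt_of_dist_lt /xiA.
by apply: mulr_gt0 => //; apply: powR_gt0; apply: lt_trans a_gt1.
Qed.

Lemma visual_expansion x y x' y' (c : R) :
  (gprod_bd o x' y' <= gprod_bd o x y + c%:E)%E -> C1 / C2 * a `^ (- c) * d x y <= d x' y'.
Proof.
have [d_ge0 [d_eq0 _]] := d_metric.
have [<-|xy] := pselect (x = y); first by rewrite (d_eq0 x x).2 // mulr0 d_ge0.
have [p [-> [_ dp]]] := d_visual xy.
have [x'y'|x'y'] := pselect (x' = y').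
  rewrite -x'y' => /(le_trans (gprod_bd_xx o x' (p + c + 1))).
  by rewrite -EFinD lee_fin => ?; lra.
have [p' [-> [dp' _]]] := d_visual x'y'; rewrite -EFinD lee_fin => p'pc.
apply: le_trans dp'; apply: (@le_trans _ _ (C1 / C2 * a `^ (- c) * (C2 * a `^ (- p)))).
  by apply: ler_wpM2l => //; apply: mulr_ge0; [apply: divr_ge0; apply: ltW | apply: powR_ge0].
have a_neq0 : a != 0 by rewrite gt_eqF // (lt_trans ltr01 a_gt1).
have -> : C1 / C2 * a `^ (- c) * (C2 * a `^ (- p)) = C1 * a `^ (- (p + c)).
  by rewrite opprD powRD ?a_neq0 ?implybT //; field; rewrite gt_eqF.
by rewrite ler_pM2l //; apply: (ler_powR (ltW a_gt1)); move: p'pc; lra.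
Qed.

End Visual.

Section Hyperbolic.

Variable delta : R.
Hypothesis delta_ge0 : 0 <= delta.
Hypothesis four_point : forall o x y z, Num.min (gp o x y) (gp o y z) - delta <= gp o x z.

Lemma gprod_chain2 (M : R) o x y z : M <= gp o x y -> M <= gp o y z -> M - delta <= gp o x z.
Proof.
by move=> Mxy Myz; apply: le_trans (four_point o x y z); rewrite lerD2r le_min Mxy Myz.
Qed.

Lemma gprod_chain3 (M : R) o x y z w : M <= gp o x y -> M <= gp o y z -> M <= gp o z w ->
  M - 2 * delta <= gp o x w.
Proof.
move=> Mxy Myz Mzw; have Mxz := gprod_chain2 Mxy Myz.
have Mzw' : M - delta <= gp o z w by have := delta_ge0; lra.
by have := gprod_chain2 Mxz Mzw'; lra.
Qed.

Lemma gprod_ge_perturb (K M : R) x u v : dist u v <= K -> M <= gp one x u ->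
  M <= dist u one - K -> M - delta <= gp one x v.
Proof.
by move=> duv Mxu MK; apply: gprod_chain2 Mxu _; have := gprod_ge_dist u v; lra.
Qed.

Lemma equiv_rays_close u v : ray u -> ray v -> ray_equiv R gr S u v ->
  forall n, dist (u n) (v n) <= 4 * delta.
Proof.
move=> Hu Hv [K [HK _]] n.
have [k Hk] := exists_natr_ge K.
pose t := (n + k)%N.
have [s Hs] := HK t.
have K_ge0 : 0 <= K by apply: le_trans Hs; exact: wdist_ge0.
have tri1 := wdist_triangle (v s) (u t) one.
have tri2 := wdist_triangle (u t) (v s) one.
rewrite (wdistC (v s) (u t)) !ray_norm // in tri1.
rewrite !ray_norm // in tri2.
have htR : t%:R = n%:R + k%:R :> R by rewrite natrD.
have hns : (n <= s)%N by rewrite -(ler_nat R); lra.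
have G1 : n%:R <= gp one (u n) (u t) by rewrite gprodC // gprod_ray // leq_addr.
have G3 : n%:R <= gp one (v s) (v n) by rewrite gprod_ray.
have G2 : n%:R <= gp one (u t) (v s) by rewrite /gprod !ray_norm //; lra.
by have := gprod_chain3 G1 G2 G3; rewrite /gprod !ray_norm //; lra.
Qed.

Section Shadow.
Variables (p : nat -> G) (R0 : R).
Hypothesis p_geodesic : forall t t', (t <= t')%N -> dist (p t) (p t') = (t' - t)%:R.
Hypothesis p0_near : dist one (p 0%N) <= R0.

Lemma shadow_radius_ge0 : 0 <= R0.
Proof. by apply: le_trans p0_near; apply: wdist_ge0. Qed.

Lemma near_geodesic_norm_ge t : t%:R - R0 <= dist one (p t).
Proof.
have := p0_near; have := wdist_triangle (p 0%N) one (p t).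
by rewrite p_geodesic // subn0 (wdistC (p 0%N)); lra.
Qed.

Lemma near_geodesic_norm_le t : dist (p t) one <= t%:R + R0.
Proof.
have := p0_near; have := wdist_triangle (p t) (p 0%N) one.
by rewrite (wdistC (p t) (p 0%N)) p_geodesic // subn0 (wdistC (p 0%N) one); lra.
Qed.

Lemma segment_shadow j L gam : dist one (p j) = L%:R -> gam 0%N = one -> gam L = p j ->
  (forall t t', (t <= t')%N -> (t' <= L)%N -> dist (gam t) (gam t') = (t' - t)%:R) ->
  forall t, (t <= j)%N -> t%:R + R0 <= j%:R -> dist (gam t) (p t) <= 3 * R0 + 2 * delta.
Proof.
move=> dL gam0 gamL gam_geo t htj htR.
have R0_ge0 := shadow_radius_ge0.
have pj_ge := near_geodesic_norm_ge j; have pt_ge := near_geodesic_norm_ge t.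
have pt_le := near_geodesic_norm_le t.
have htL : (t <= L)%N by rewrite -(ler_nat R) -dL; lra.
have gt : dist (gam t) one = t%:R by rewrite wdistC // -gam0 gam_geo // subn0.
have gtj : dist (gam t) (p j) = (L - t)%:R by rewrite -gamL gam_geo.
have C1 : t%:R - R0 <= gp one (gam t) (p j).
  by rewrite /gprod gt gtj (wdistC (p j)) dL natrB //; lra.
have C2 : t%:R - R0 <= gp one (p j) (p t).
  rewrite /gprod (wdistC (p j) (p t)) p_geodesic // (wdistC (p j)) natrB //.
  by rewrite -(wdistC one (p t)); lra.
by have := gprod_chain2 C1 C2; rewrite /gprod gt; lra.
Qed.

(* The geodesics from 1 to p j, j -> oo, have a limit ray by König's lemma. *)
Lemma ray_shadow : exists r, ray r /\ forall t, dist (r t) (p t) <= 3 * R0 + 2 * delta.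
Proof.
have [L HL] := choice (fun j => geodesic_segment (p j)).
have [gam Hgam] := choice (fun j => HL j).
have [k0 Hk0] := exists_natr_ge R0.
have [kn Hkn] := exists_natr_ge (3 * R0 + 2 * delta).
have gam_close j t : (t + k0 <= j)%N -> dist (gam j t) (p t) <= 3 * R0 + 2 * delta.
  move=> hj; have [dL gam0 gamL gam_geo] := Hgam j.
  apply: (segment_shadow dL gam0 gamL gam_geo); first by lia.
  by rewrite -(ler_nat R) natrD in hj; lra.
have gam_in_ball t j : (t + k0 <= j)%N -> List.In (gam j t) (ball_list (p t) kn).
  move=> hj; apply: In_ball_list; rewrite wdistC.
  exact: le_trans (gam_close _ _ hj) Hkn.
have [r Hr] := konig gam_in_ball.
have tL j t : (t + k0 <= j)%N -> (t <= L j)%N.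
  move=> hj; have [dL _ _ _] := Hgam j; have pj_ge := near_geodesic_norm_ge j.
  rewrite dL -(ler_nat R) natrD in hj pj_ge.
  by rewrite -(ler_nat R); lra.
exists r; split; last first.
  by move=> t; have [j [hj <-]] := Hr t (t + k0)%N => //; apply: gam_close.
split.
  by have [j [_ <-]] := Hr 0%N 0%N => //; have [] := Hgam j.
move=> i j' hij; have [j [hj Hj]] := Hr j' (j' + k0)%N.
rewrite -!Hj ?(leq_trans hij) //; have [_ _ _ gam_geo] := Hgam j.
by apply: gam_geo => //; apply: tL.
Qed.

End Shadow.

Lemma gprod_diverges_close x u v (K : R) : gprod_diverges x u ->
  (forall t, dist (u t) (v t) <= K) -> (forall t, dist (u t) one = t%:R) ->
  gprod_diverges x v.
Proof.
move=> Hx Huv Hu M.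
have [k Hk] := exists_natr_ge (M + delta + K).
have [N HN] := Hx (M + delta).
exists (maxn N k) => i j hi hj.
have MK : M + delta <= dist (u j) one - K.
  have : k%:R <= j%:R :> R by rewrite ler_nat; lia.
  by rewrite Hu; lra.
by have := gprod_ge_perturb (Huv j) (HN i j ltac:(lia) ltac:(lia)) MK; lra.
Qed.

Lemma represents_ray_class (z : bdry R gr S) r x : ray r -> proj1_sig z = ray_class r ->
  represents z x -> gprod_diverges x r.
Proof.
move=> Hr zr [q [zq Hxq]]; rewrite zr in zq; case: zq => Hq rq.
apply: (gprod_diverges_close Hxq) => t; last exact: ray_norm.
by rewrite wdistC; apply: equiv_rays_close.
Qed.

Lemma gprod_diverges_near a k h n (R0 : R) : gprod_diverges a k -> ray k ->
  dist (k n) h <= R0 ->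
  exists N, forall i, (N <= i)%N -> n%:R - R0 - 2 * delta <= gp one (a i) h.
Proof.
move=> Ha Hk knh.
have R0_ge0 : 0 <= R0 by apply: le_trans knh; apply: wdist_ge0.
have [N HN] := Ha n%:R.
exists N => i hi; set t := maxn N n.
have E1 : n%:R <= gp one (a i) (k t) by apply: HN => //; apply: leq_maxl.
have E2 : n%:R - R0 - delta <= gp one (k t) h.
  apply: (gprod_ge_perturb knh); first by rewrite gprod_ray //; [lra | apply: leq_maxr].
  by rewrite ray_norm //; lra.
have E1' : n%:R - R0 - delta <= gp one (a i) (k t) by have := delta_ge0; lra.
by have := gprod_chain2 E1' E2; lra.
Qed.

Section Translation.
Variable n : nat.

Definition passes_near h (z : bdry R gr S) :=
  exists k, proj1_sig z k /\ dist (k n) h <= 10 * delta.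

Definition translate_spec h (z z' : bdry R gr S) := exists k r (K : R),
  [/\ proj1_sig z k, dist (k n) h <= 10 * delta, ray r, proj1_sig z' = ray_class r
    & forall t, dist (r t) (mul (inv h) (k (n + t)%N)) <= K].

Lemma translate_exists h z : passes_near h z -> exists z', translate_spec h z z'.
Proof.
move=> [k [zk knh]]; have [_ [_ Hk _ _]] := bdry_mem zk.
pose p t := mul (inv h) (k (n + t)%N).
have p_geo t t' : (t <= t')%N -> dist (p t) (p t') = (t' - t)%:R.
  by move=> htt'; rewrite wdist_mull; case: Hk => _ ->; rewrite ?subnDl ?leq_add2l.
have p0_near : dist one (p 0%N) <= 10 * delta.
  by rewrite /p -(gmulV gr h) wdist_mull addn0 wdistC.
have [r [Hr rp]] := ray_shadow p_geo p0_near.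
by exists (bdry_of_ray Hr), k, r, (3 * (10 * delta) + 2 * delta).
Qed.

Lemma translate_map h : exists f : bdry R gr S -> bdry R gr S,
  forall z, passes_near h z -> translate_spec h z (f z).
Proof.
suff /choice [f hf] z : exists z', passes_near h z -> translate_spec h z z' by exists f.
have [/translate_exists [z' ?]|] := pselect (passes_near h z); first by exists z'.
by exists z.
Qed.

Lemma represents_translate h z z' x' : translate_spec h z z' -> represents z' x' ->
  exists k, [/\ proj1_sig z k, ray k, dist (k n) h <= 10 * delta &
    gprod_diverges (fun i => mul h (x' i)) k].
Proof.
move=> [k [r [K [zk kh Hr z'r rk]]]] z'x'; have [_ [_ Hk _ _]] := bdry_mem zk.
exists k; split => //.
have := gprod_diverges_close (represents_ray_class Hr z'r z'x') rk (fun t => ray_norm t Hr).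
by move=> x'p; apply: (gprod_diverges_translate x'p) => t; rewrite gmulKVg.
Qed.

Lemma gprod_bd_translate o h z1 z2 z1' z2' :
  translate_spec h z1 z1' -> translate_spec h z2 z2' ->
  (gprod_bd o z1' z2' <=
   gprod_bd o z1 z2 + (2 * dist o one + 34 * delta - n%:R)%:E)%E.
Proof.
move=> z1z1' z2z2'; apply: ge_ereal_sup => _ [x' [y' [z1'x' z2'y' ->]]].
have [k1 [z1k1 Hk1 k1h Ha]] := represents_translate z1z1' z1'x'.
have [k2 [z2k2 Hk2 k2h Hb]] := represents_translate z2z2' z2'y'.
set a := fun i => mul h (x' i) in Ha *; set b := fun j => mul h (y' j) in Hb *.
have h_norm : dist h one <= n%:R + 10 * delta.
  have := wdist_triangle h (k1 n) one.
  by rewrite ray_norm // (wdistC h (k1 n)); lra.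
have [Na HNa] := gprod_diverges_near Ha Hk1 k1h.
have [Nb HNb] := gprod_diverges_near Hb Hk2 k2h.
apply: (@le_trans _ _ (liminf2 (fun i j => (gp o (a i) (b j))%:E) +
                       (2 * dist o one + 34 * delta - n%:R)%:E)).
  apply: liminf2_leD; exists (maxn Na Nb) => i j hi hj.
  have := HNa i ltac:(lia); have := HNb j ltac:(lia).
  have := gprod_le_base o one (x' i) (y' j).
  have := gprod_mull h one (x' i) (y' j); rewrite gmulg1.
  have := gprod_change_base h (a i) (b j).
  have := gprod_le_base one o (a i) (b j); rewrite (wdistC one o).
  by have := delta_ge0; lra.
by rewrite leeD2r //; apply: ereal_sup_ubound; exists a, b; split => //; [exists k1 | exists k2].
Qed.

Lemma passes_near_of_gprod_bd o (xi z : bdry R gr S) g :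
  ray g -> proj1_sig xi = ray_class g ->
  ((n%:R + dist o one)%:E < gprod_bd o xi z)%E -> passes_near (g n) z.
Proof.
move=> Hg xig /ereal_sup_gt [_ [x [y [[k [xik Hxk]] [k2 [zk2 Hyk2]] ->]]] Hv].
have [N1 HN1] := lt_liminf2 Hv.
have [_ [_ Hk2 _ _]] := bdry_mem zk2.
move: xik; rewrite xig => -[Hk gk].
have [Nx HNx] := Hxk n%:R; have [Ny HNy] := Hyk2 n%:R.
set I := maxn (maxn N1 Nx) (maxn Ny n).
have G1 : n%:R - delta <= gp one (k n) (x I).
  apply: (@gprod_chain2 n%:R one (k n) (k I) (x I)); first by rewrite gprodC gprod_ray //; lia.
  by rewrite gprodC; apply: HNx; lia.
have G2 : n%:R - delta <= gp one (x I) (y I).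
  have := HN1 I I ltac:(lia) ltac:(lia); have := gprod_le_base o one (x I) (y I).
  by have := delta_ge0; lra.
have G3 : n%:R - delta <= gp one (y I) (k2 n).
  apply: (@gprod_chain2 n%:R one (y I) (k2 I) (k2 n)); first by apply: HNy; lia.
  by rewrite gprod_ray //; lia.
have Dk : dist (k n) (k2 n) <= 6 * delta.
  by have := gprod_chain3 G1 G2 G3; rewrite /gprod !ray_norm //; lra.
have Dg := equiv_rays_close Hg Hk gk n.
exists k2; split => //; have := wdist_triangle (k2 n) (k n) (g n).
by rewrite (wdistC (k2 n) (k n)) (wdistC (k n) (g n)); lra.
Qed.

Lemma passes_near_cover o xi : exists2 h, List.In h (ball_list one n) &
  forall z, ((n%:R + dist o one)%:E < gprod_bd o xi z)%E -> passes_near h z.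
Proof.
have [g [Hg xig]] := proj2_sig xi.
exists (g n); last by move=> z; apply: passes_near_of_gprod_bd.
by apply: In_ball_list; rewrite wdistC ray_norm.
Qed.

End Translation.

End Hyperbolic.

End WordMetric.

Theorem theorem6p6 (R : realType) (G : Type) (gr : group_on G) (S : seq G)
  (hS : symmetric_gen_set gr S) (hyp : hyperbolic_Cayley R gr S)
  (d : bdry R gr S -> bdry R gr S -> R) (hd : visual_metric d) :
  exists (N : nat) (U : 'I_N -> set (bdry R gr S))
         (f : 'I_N -> bdry R gr S -> bdry R gr S) (L : 'I_N -> R),
    (forall i, bd_open (U i)) /\
    (forall xi : bdry R gr S, exists i, U i xi) /\
    (forall i, 1 < L i) /\
    (forall i x y, U i x -> U i y -> L i * d x y <= d (f i x) (f i y)).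
Proof.
have [delta [delta_ge0 four_point]] := hyp.
have [d_metric [d_top [ob [a [C1 [C2 [a_gt1 [C1_gt0 [C2_gt0 d_visual]]]]]]]]] := hd.
pose c := 2 * wdist R gr S ob (gone gr) + 34 * delta.
have [n L_gt1] := exists_powR_gt1 c (divr_gt0 C1_gt0 C2_gt0) a_gt1.
pose hs := ball_list gr S (gone gr) n.
pose h (i : 'I_(size hs)) := nth (gone gr) hs i.
pose U i := metric_interior d (passes_near delta n (h i)).
have [f hf] := choice (fun i => translate_map hS delta_ge0 four_point n (h i)).
exists (size hs), U, f, (fun=> C1 / C2 * a `^ (n%:R - c)); split; [|split; [|split]] => //.
- by move=> i; apply/d_top/metric_open_interior.
- move=> xi; have [g hs_g xi_g] := passes_near_cover hS delta_ge0 four_point n ob xi.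
  have [i [hi ig]] := List_In_nth (gone gr) hs_g.
  exists (Ordinal hi); rewrite /U /h /= ig.
  exact: (gprod_bd_gt_sub_interior hS a_gt1 C1_gt0 d_visual xi_g).
- move=> i x y Ux Uy.
  have := gprod_bd_translate hS delta_ge0 four_point ob
    (hf i x (metric_interior_sub d_metric Ux)) (hf i y (metric_interior_sub d_metric Uy)).
  by move/(visual_expansion hS d_metric a_gt1 C1_gt0 C2_gt0 d_visual); rewrite opprB.
Qed.
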